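(* Let $U,V\in U(2^n)$ satisfy $D(U,V)\le\epsilon$. Then for every $P\in\mathcal{P}_n$, $$D(UPU^T, VPV^T)\le 2\epsilon,$$ where the transpose is taken in the computational basis.
   Context: For $d\times d$ unitaries ($d=2^n$), $D(U_1,U_2)=\frac{1}{\sqrt{2d^2}}\|U_1\otimes U_1^*-U_2\otimes U_2^*\|_2$ with $\|A\|_2=\sqrt{\mathrm{Tr}[A^\dagger A]}$ the Frobenius norm; equivalently $D(U_1,U_2)=\sqrt{1-\frac{1}{d^2}|\mathrm{Tr}[U_1U_2^\dagger]|^2}$. $\mathcal{P}_n$ is the $n$-qubit Pauli group, consisting of $i^k P_1\otimes\cdots\otimes P_n$ with $P_j\in\{I,X,Y,Z\}$, $k\in\{0,1,2,3\}$. *)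

From HB Require Import structures.
From mathcomp Require Import all_boot all_order all_algebra.
From mathcomp Require Import complex mxtens.
Set Implicit Arguments. Unset Strict Implicit. Unset Printing Implicit Defensive.
Import Order.TTheory GRing.Theory Num.Theory.
Local Open Scope ring_scope.

Section Quantum.
Variable R : rcfType.
Local Notation C := (R[i]).

Definition adj m n (A : 'M[C]_(m, n)) : 'M[C]_(n, m) := (map_mx Num.conj A)^T.

Definition unitary d (U : 'M[C]_d) : Prop := U *m adj U = 1%:M.

Definition Ddist d (U1 U2 : 'M[C]_d) : R :=
  Num.sqrt (1 - (Normc.normc (\tr (U1 *m adj U2))) ^+ 2 / (d%:R) ^+ 2).

Inductive pauli1 := PI | PX | PY | PZ.

Definition imag : C := Complex 0 1.

Definition pauli1_mx (p : pauli1) : 'M[C]_2 :=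
  \matrix_(i < 2, j < 2)
    match p with
    | PI => if i == j then 1 else 0
    | PX => if i == j then 0 else 1
    | PY => if i == j then 0 else (if (i : nat) == 0%N then - imag else imag)
    | PZ => if i == j then (if (i : nat) == 0%N then 1 else -1) else 0
    end.

(* tensor product P_1 (x) ... (x) P_n (first n letters of s) *)
Fixpoint pauli_string (n : nat) (s : seq pauli1) : 'M[C]_(2 ^ n) :=
  match n with
  | 0 => 1%:M
  | n'.+1 => castmx (esym (expnS 2 n'), esym (expnS 2 n'))
               (tensmx (pauli1_mx (head PI s)) (pauli_string n' (behead s)))
  end.

Definition in_pauli_group n (P : 'M[C]_(2 ^ n)) : Prop :=
  exists (k : 'I_4) (s : n.-tuple pauli1), P = imag ^+ k *: pauli_string n s.

End Quantum.

From HB Require Import structures.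
From mathcomp Require Import all_boot all_order all_algebra.
From mathcomp Require Import complex mxtens.
From mathcomp Require Import ring lra.
Set Implicit Arguments. Unset Strict Implicit. Unset Printing Implicit Defensive.
Import Order.TTheory GRing.Theory Num.Theory.
Local Open Scope ring_scope.

(* Put W := V^dagger U.  Then Tr[(U P U^T)(V P V^T)^dagger] = Tr[W W'] with
   W' := P W^T P^dagger, again unitary, and Tr W' = Tr W = Tr[U V^dagger].
   For unitaries X, Y the positivity of Tr[M M^dagger], M := X + Y^dagger - 2,
   reads Re Tr[XY] >= 2 Re Tr X + 2 Re Tr Y - 3d; applied to X = zW, Y = zW'
   with the phase z making z Tr W = |Tr W|, it gives |Tr[W W']| >= 4|Tr W| - 3d.
   Finally s >= 4t - 3 with t >= 0 implies 1 - s^2 <= 4 (1 - t^2). *)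

Section ConjugateTranspose.
Variable R : rcfType.
Local Notation C := R[i].

Lemma adjM m n p (A : 'M[C]_(m, n)) (B : 'M[C]_(n, p)) :
  adj (A *m B) = adj B *m adj A.
Proof. by rewrite /adj map_mxM trmx_mul. Qed.

Lemma adjK m n (A : 'M[C]_(m, n)) : adj (adj A) = A.
Proof. by apply/matrixP => i j; rewrite !mxE conjCK. Qed.

Lemma adjD m n (A B : 'M[C]_(m, n)) : adj (A + B) = adj A + adj B.
Proof. by apply/matrixP => i j; rewrite !mxE rmorphD. Qed.

Lemma adjN m n (A : 'M[C]_(m, n)) : adj (- A) = - adj A.
Proof. by apply/matrixP => i j; rewrite !mxE rmorphN. Qed.

Lemma adjZ m n (c : C) (A : 'M[C]_(m, n)) : adj (c *: A) = c^* *: adj A.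
Proof. by apply/matrixP => i j; rewrite !mxE rmorphM. Qed.

Lemma adj_scalar m (c : C) : adj (c%:M : 'M[C]_m) = c^*%:M.
Proof. by apply/matrixP => i j; rewrite !mxE rmorphMn eq_sym. Qed.

Lemma adj_tr m n (A : 'M[C]_(m, n)) : adj A^T = (adj A)^T.
Proof. by apply/matrixP => i j; rewrite !mxE. Qed.

Lemma mxtrace_adj m (A : 'M[C]_m) : \tr (adj A) = (\tr A)^*.
Proof. by rewrite /adj mxtrace_tr trace_map_mx. Qed.

Lemma mxtrace_mul_adj_ge0 m n (A : 'M[C]_(m, n)) : 0 <= \tr (A *m adj A).
Proof.
apply: sumr_ge0 => i _; rewrite mxE.
by apply: sumr_ge0 => j _; rewrite !mxE; exact: mul_conjC_ge0.
Qed.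

Lemma mxtrace_mul_adj_conj m (U V P : 'M[C]_m) :
  \tr (U *m P *m U^T *m adj (V *m P *m V^T)) =
  \tr ((adj V *m U) *m (P *m (adj V *m U)^T *m adj P)).
Proof.
by rewrite !adjM adj_tr trmx_mul !mulmxA mxtrace_mulC !mulmxA.
Qed.

End ConjugateTranspose.

Section Unitary.
Variable R : rcfType.
Local Notation C := R[i].

Lemma adj_mulmx_unitary m (U : 'M[C]_m) : unitary U -> adj U *m U = 1%:M.
Proof. exact: mulmx1C. Qed.

Lemma unitary_adj m (U : 'M[C]_m) : unitary U -> unitary (adj U).
Proof. by move=> uU; rewrite /unitary adjK adj_mulmx_unitary. Qed.

Lemma unitary_mul m (U V : 'M[C]_m) : unitary U -> unitary V -> unitary (U *m V).
Proof.
by move=> uU uV; rewrite /unitary adjM mulmxA -(mulmxA U) uV mulmx1.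
Qed.

Lemma unitary_tr m (U : 'M[C]_m) : unitary U -> unitary U^T.
Proof.
by move=> uU; rewrite /unitary adj_tr -trmx_mul adj_mulmx_unitary ?trmx1.
Qed.

Lemma unitaryZ m (c : C) (U : 'M[C]_m) :
  c * c^* = 1 -> unitary U -> unitary (c *: U).
Proof.
move=> c1 uU; rewrite /unitary adjZ -scalemxAl -scalemxAr scalerA.
by rewrite uU c1 scale1r.
Qed.

Lemma unitary_castmx m m' (e : m = m') (U : 'M[C]_m) :
  unitary U -> unitary (castmx (e, e) U).
Proof. by case: m' / e; rewrite castmx_id. Qed.

Lemma tensmx11 m n : (1%:M : 'M[C]_m) *t (1%:M : 'M[C]_n) = 1%:M.
Proof.
apply/matrixP => i j.
case: (mxtens_indexP i) => i0 i1; case: (mxtens_indexP j) => j0 j1.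
rewrite tensmxE !mxE (inj_eq (can_inj (@mxtens_indexK _ _))) xpair_eqE.
by case: (i0 == j0); case: (i1 == j1); rewrite ?mul1r ?mul0r.
Qed.

Lemma unitary_tens m n (U : 'M[C]_m) (V : 'M[C]_n) :
  unitary U -> unitary V -> unitary (U *t V).
Proof.
move=> uU uV; rewrite /unitary /adj map_mxT trmx_tens tensmx_mul.
by rewrite -/(adj U) -/(adj V) uU uV tensmx11.
Qed.

Lemma mxtrace_unitary_conj m (P A : 'M[C]_m) :
  unitary P -> \tr (P *m A *m adj P) = \tr A.
Proof.
by move=> uP; rewrite mxtrace_mulC mulmxA adj_mulmx_unitary // mul1mx.
Qed.

End Unitary.

Section Pauli.
Variable R : rcfType.

Lemma imag_mul_conj : imag R * (imag R)^* = 1.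
Proof. by rewrite -normCK /imag sqr_normc; apply/eqP; rewrite eq_complex /=; simpc. Qed.

Lemma unitary_pauli1 p : unitary (pauli1_mx R p).
Proof.
apply/matrixP => i j; rewrite !mxE !big_ord_recl big_ord0 /= !mxE.
case: p; case: i => [[|[|//]] ?]; case: j => [[|[|//]] ?] /=;
  by rewrite ?(rmorph0, rmorph1, rmorphN, mulr0, mul0r, mulr1, mul1r,
               add0r, addr0, mulrNN, imag_mul_conj).
Qed.

Lemma unitary_pauli_string n s : unitary (pauli_string R n s).
Proof.
elim: n s => [|n IHn] s /=; first by rewrite /unitary adj_scalar conjC1 mulmx1.
exact/unitary_castmx/unitary_tens/IHn/unitary_pauli1.
Qed.

Lemma unitary_pauli n (P : 'M[R[i]]_(2 ^ n)) : in_pauli_group P -> unitary P.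
Proof.
case=> k [s ->]; apply/unitaryZ/unitary_pauli_string.
by rewrite rmorphXn -exprMn imag_mul_conj expr1n.
Qed.

End Pauli.

Section TraceInequality.
Variable R : rcfType.
Local Notation C := R[i].

Lemma Re_mxtrace_mul_unitary d (X Y : 'M[C]_d) : unitary X -> unitary Y ->
  2 * 'Re (\tr X) + 2 * 'Re (\tr Y) - 3 * d%:R <= 'Re (\tr (X *m Y)).
Proof.
move=> uX uY.
pose M := X + adj Y - 2 *: 1%:M.
have trM : \tr (M *m adj M) =
    2 * ('Re (\tr (X *m Y)) - (2 * 'Re (\tr X) + 2 * 'Re (\tr Y) - 3 * d%:R)).
  rewrite /M !adjD adjN adjK adjZ adj_scalar conjC1 conjC_nat.
  rewrite !mulmxDl !mulmxDr ?mulmxN ?mulNmx ?mulmxDr ?mulmxN.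
  rewrite -!scalemxAl -!scalemxAr !mulmx1 !mul1mx uX adj_mulmx_unitary // -adjM.
  rewrite !raddfD !raddfN /= !mxtraceZ !mxtrace1 !mxtrace_adj !ReE.
  by field.
by rewrite -subr_ge0 -(pmulr_rge0 _ (ltr0n _ 2)) -trM mxtrace_mul_adj_ge0.
Qed.

Lemma unit_phase (a : C) : exists2 z : C, z * z^* = 1 & z * a = `|a|.
Proof.
have [->|a0] := eqVneq a 0; first by exists 1; rewrite ?rmorph1 ?mulr1 ?mulr0 ?normr0.
exists (`|a| / a); last by rewrite divfK.
by rewrite -normCK normf_div normr_id divff ?expr1n ?normr_eq0.
Qed.

Lemma norm_mxtrace_mul_unitary d (W W' : 'M[C]_d) :
  unitary W -> unitary W' -> \tr W' = \tr W ->
  4 * `|\tr W| - 3 * d%:R <= `|\tr (W *m W')|.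
Proof.
move=> uW uW' trW'; have [z z1 za] := unit_phase (\tr W).
have nz : `|z| = 1 by apply/eqP; rewrite -sqrp_eq1 // normCK z1.
have ReW : 'Re (\tr (z *: W)) = `|\tr W|.
  by rewrite mxtraceZ za; apply/Creal_ReP/normr_real.
have ReW' : 'Re (\tr (z *: W')) = `|\tr W| by rewrite -ReW !mxtraceZ trW'.
have := Re_mxtrace_mul_unitary (unitaryZ z1 uW) (unitaryZ z1 uW').
rewrite ReW ReW' -scalemxAl -scalemxAr !mxtraceZ.
have -> : 4 * `|\tr W| = 2 * `|\tr W| + 2 * `|\tr W| :> C by ring.
move/le_trans; apply; apply: le_trans (leif_Re_Creal _).1 _.
by rewrite !normrM nz !mul1r.
Qed.

End TraceInequality.

Section Distance.
Variable R : rcfType.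

Lemma sqrt_one_sub_sqr_le (s t : R) : 0 <= t -> 4 * t - 3 <= s ->
  Num.sqrt (1 - s ^+ 2) <= 2 * Num.sqrt (1 - t ^+ 2).
Proof.
move=> t0 ts.
have le4 : 1 - s ^+ 2 <= 4 * (1 - t ^+ 2).
  have [t34|t34] := lerP (4 * t) 3; rewrite !expr2; first nra.
  have : (4 * t - 3) * (4 * t - 3) <= s * s by apply: ler_pM => //; lra.
  have : 0 <= (t - 1) * (t - 1) by rewrite -expr2 sqr_ge0.
  nra.
apply: le_trans (ler_wsqrtr le4) _.
have -> : 4 = 2 ^+ 2 :> R by rewrite expr2; lra.
by rewrite sqrtrM ?sqrtr_sqr ?ger0_norm // sqr_ge0.
Qed.

Lemma normC_normc (x : R[i]) : `|x| = ((Normc.normc x)%:C)%C.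
Proof. by case: x. Qed.

Lemma normc_ge0 (x : R[i]) : 0 <= Normc.normc x.
Proof. by case: x => ? ?; exact: sqrtr_ge0. Qed.

Lemma Ddist_le_double d (A B A' B' : 'M[R[i]]_d) : (0 < d)%N ->
  4 * `|\tr (A *m adj B)| - 3 * d%:R <= `|\tr (A' *m adj B')| ->
  Ddist A' B' <= 2 * Ddist A B.
Proof.
move=> d0; rewrite /Ddist !normC_normc -!expr_div_n.
set a := Normc.normc _; set b := Normc.normc _.
move=> abC; have ab : 4 * a - 3 * d%:R <= b.
  by rewrite -lecR rmorphB !rmorphM /= !rmorph_nat.
have d0' : 0 < d%:R :> R by rewrite ltr0n.
apply: sqrt_one_sub_sqr_le; first by rewrite divr_ge0 ?normc_ge0 ?ltW.
have -> : 4 * (a / d%:R) - 3 = (4 * a - 3 * d%:R) / d%:R by field; rewrite gt_eqF.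
by rewrite ler_pM2r ?invr_gt0.
Qed.

End Distance.

Theorem lemma7 (R : rcfType) (n : nat) (U V : 'M[R[i]]_(2 ^ n)) (eps : R) :
  unitary U -> unitary V -> Ddist U V <= eps ->
  forall P : 'M[R[i]]_(2 ^ n), in_pauli_group P ->
  Ddist (U *m P *m U^T) (V *m P *m V^T) <= 2 * eps.
Proof.
move=> uU uV UVeps P /unitary_pauli uP.
set W := adj V *m U.
have uW : unitary W by apply/unitary_mul/uU/unitary_adj.
have uW' : unitary (P *m W^T *m adj P).
  by apply/unitary_mul/unitary_adj/uP/unitary_mul/unitary_tr.
have trW' : \tr (P *m W^T *m adj P) = \tr W.
  by rewrite mxtrace_unitary_conj // mxtrace_tr.
apply: le_trans (ler_wpM2l (ler0n _ 2) UVeps).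
apply: Ddist_le_double; first by rewrite expn_gt0.
rewrite mxtrace_mul_adj_conj -/W [\tr (U *m _)]mxtrace_mulC.
exact: norm_mxtrace_mul_unitary.
Qed.
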